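(* Every span-word is accepted by $\widehat{\mathcal{T}_{p/q}}$; that is, for every $n\in\mathbb{N}$, the infinite word $M_n\ominus\mu_n$ is accepted by $\widehat{\mathcal{T}_{p/q}}$.
   Context: Let $p>q>1$ be coprime integers, $A_p=\{0,\dots,p-1\}$, $A_q=\{0,\dots,q-1\}$ and $B=\{p-(2q-1),\dots,p-1\}$. For $n\in\mathbb{N}$ and $a\in\mathbb{Z}$, let $\tau(n,a)=\frac{np+a}{q}$, defined only when $q$ divides $np+a$. Let $\mathcal{T}_{p/q}$ be the deterministic automaton with state set $\mathbb{N}$, alphabet $A_p$, initial state $0$, and transitions $n\xrightarrow{a}\tau(n,a)$ for $a\in A_p$ with $\tau(n,a)$ defined. Every state $n$ has exactly one outgoing transition labelled by a letter of $A_q$ and exactly one labelled by a letter of $\{p-q,\dots,p-1\}$; the minimal word $\mu_n\in A_q^{\omega}$ (resp. maximal word $M_n\in\{p-q,\dots,p-1\}^{\omega}$) is the unique infinite word over $A_q$ (resp. over $\{p-q,\dots,p-1\}$) labelling a path of $\mathcal{T}_{p/q}$ starting at $n$. The span-word of $n$ is $M_n\ominus\mu_n$, where $\ominus$ denotes letter-wise subtraction; it is a word over $B$. Let $\widehat{\mathcal{T}_{p/q}}$ be the deterministic automaton with state set $\mathbb{N}$, alphabet $B$, initial state $0$, and transitions $n\xrightarrow{a}\tau(n,a)$ for $a\in B$ with $\tau(n,a)$ defined. An infinite word is accepted by an automaton if every finite prefix labels a path starting at the initial state $0$. *)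

From mathcomp Require Import all_boot all_order all_algebra.
Set Implicit Arguments. Unset Strict Implicit. Unset Printing Implicit Defensive.
Import Order.TTheory GRing.Theory Num.Theory.
Local Open Scope ring_scope.

(* One transition n --a--> m of T_{p/q}: m = tau(n,a) = (n p + a)/q, i.e.
   q * m = n * p + a with m a natural number (this encodes both that q divides
   n p + a and that the result is a state in N). *)
Definition step (p q : nat) (n : nat) (a : int) (m : nat) : Prop :=
  (m * q)%:Z = (n * p)%:Z + a.

Definition in_Aq (q : nat) (a : int) : Prop := 0 <= a /\ a < q%:Z.
Definition in_max_alph (p q : nat) (a : int) : Prop :=
  (p%:Z - q%:Z) <= a /\ a < p%:Z.
Definition in_B (p q : nat) (a : int) : Prop :=
  (p%:Z - (2 * q)%:Z + 1) <= a /\ a < p%:Z.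

Definition labels_path (L : int -> Prop) (p q n : nat) (w : nat -> int) : Prop :=
  exists s : nat -> nat, s 0%N = n /\
    forall k : nat, L (w k) /\ step p q (s k) (w k) (s k.+1).

Definition is_min_word (p q n : nat) (mu : nat -> int) : Prop :=
  labels_path (in_Aq q) p q n mu.

Definition is_max_word (p q n : nat) (M : nat -> int) : Prop :=
  labels_path (in_max_alph p q) p q n M.

Definition accepted_hat (p q : nat) (w : nat -> int) : Prop :=
  forall m : nat, exists s : nat -> nat, s 0%N = 0%N /\
    forall k : nat, (k < m)%N -> in_B p q (w k) /\ step p q (s k) (w k) (s k.+1).

(* The minimal and maximal paths from n stay ordered: their letters differ by
   less than q, so the state reached along the minimal path never overtakes
   the one reached along the maximal path.  Subtracting the two transition
   equations then shows that the differences of the states form a path of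
   the automaton labelled by the differences of the letters, which lie in B. *)
From mathcomp Require Import all_boot all_order all_algebra.
From mathcomp Require Import zify.
Set Implicit Arguments. Unset Strict Implicit. Unset Printing Implicit Defensive.
Import Order.TTheory GRing.Theory Num.Theory.
Local Open Scope ring_scope.

(* (m' - m) q = (n' - n) p + (a' - a) > -q, and the right side is nonnegative
   as soon as n < n', since then it is at least p + a' - a > p - q >= 0. *)
Lemma step_mono (p q n n' m m' : nat) (a a' : int) :
  (q <= p)%N -> step p q n a m -> step p q n' a' m' ->
  (n <= n')%N -> a < a' + q%:Z -> (m <= m')%N.
Proof. by rewrite /step => le_qp e e' le_nn' lt_aa'; nia. Qed.

Lemma step_subn (p q n n' m m' : nat) (a a' : int) :
  step p q n a m -> step p q n' a' m' -> (n <= n')%N -> (m <= m')%N ->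
  step p q (n' - n) (a' - a) (m' - m).
Proof.
rewrite /step => e e' le_nn' le_mm'.
have le_np : (n * p <= n' * p)%N by rewrite leq_mul2r le_nn' orbT.
have le_mq : (m * q <= m' * q)%N by rewrite leq_mul2r le_mm' orbT.
by rewrite !mulnBl; lia.
Qed.

Lemma max_letter_gap (p q : nat) (a b : int) :
  (q <= p)%N -> in_Aq q a -> in_max_alph p q b -> a < b + q%:Z.
Proof. by rewrite /in_Aq /in_max_alph; lia. Qed.

Lemma in_B_subr (p q : nat) (a b : int) :
  in_Aq q a -> in_max_alph p q b -> in_B p q (b - a).
Proof. by rewrite /in_Aq /in_max_alph /in_B; lia. Qed.

Theorem mainTheorem6 (p q : nat) (Hqp : (q < p)%N) (Hq : (1 < q)%N)
  (Hcop : coprime p q) (n : nat) (mu M : nat -> int) :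
  is_min_word p q n mu -> is_max_word p q n M ->
  accepted_hat p q (fun k => M k - mu k).
Proof.
move=> [s [s0 path_s]] [t [t0 path_t]] m.
have le_qp : (q <= p)%N by apply: ltnW.
have s_le_t : forall k, (s k <= t k)%N.
  elim=> [|k IHk]; first by rewrite s0 t0.
  have [mu_k step_s] := path_s k; have [M_k step_t] := path_t k.
  exact: step_mono le_qp step_s step_t IHk (max_letter_gap le_qp mu_k M_k).
exists (fun k => (t k - s k)%N); split; first by rewrite s0 t0 subnn.
move=> k _; have [mu_k step_s] := path_s k; have [M_k step_t] := path_t k.
split; first exact: in_B_subr mu_k M_k.
exact: step_subn step_s step_t (s_le_t k) (s_le_t k.+1).
Qed.
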